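(* For every even integer $g\geqslant2$, the ideal $J_g^-\subset\mathbb{C}[\alpha,\gamma]$ is generated by $\zeta_g^-$ together with $\gamma J_{g-2}^-$. Moreover, $\gamma^i\zeta^-_{g-2i}\in J_g^-$ for all integers $i\geqslant0$.
   Context: Let $\zeta_k\in\mathbb{C}[\alpha,\beta,\gamma]$ be defined by $\zeta_i=0$ for $i<0$, $\zeta_0=1$, $\zeta_{k+1}=\alpha\zeta_k+k^2(\beta+(-1)^k8)\zeta_{k-1}+2k(k-1)\gamma\zeta_{k-2}$ ($k\geqslant0$). Let $\zeta_k^\pm\in\mathbb{C}[\alpha,\gamma]$ be obtained by setting $\beta=\pm8$ in $\zeta_k$, and $J_k^\pm=(\zeta^\pm_k,\zeta^\pm_{k+1},\zeta^\pm_{k+2})\subset\mathbb{C}[\alpha,\gamma]$. Explicitly $\zeta^-_{k+1}=\alpha\zeta^-_k-16k^2\zeta^-_{k-1}+2k(k-1)\gamma\zeta^-_{k-2}$ for $k$ odd and $\zeta^-_{k+1}=\alpha\zeta^-_k+2k(k-1)\gamma\zeta^-_{k-2}$ for $k$ even. *)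

(* C[alpha,gamma] is modelled as {poly {poly algC}}:
   alpha = the outer variable 'X, gamma = the inner variable ('X)%:P. *)
From HB Require Import structures.
From mathcomp Require Import all_boot all_order all_algebra all_field.
Set Implicit Arguments. Unset Strict Implicit. Unset Printing Implicit Defensive.
Import Order.TTheory GRing.Theory Num.Theory.
Local Open Scope ring_scope.

Section Zeta.
Variable T : comRingType.
Variables (a b c : T). (* alpha, beta, gamma *)

(* zeta_aux k = (zeta_k, zeta_{k-1}, zeta_{k-2}), with zeta_i = 0 for i < 0 *)
Fixpoint zeta_aux (k : nat) : T * T * T :=
  match k with
  | 0 => (1, 0, 0)
  | k'.+1 =>
      let '(z0, z1, z2) := zeta_aux k' in
      (a * z0 + (k' ^ 2)%N%:R * (b + (-1) ^+ k' * 8) * z1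
         + (2 * k' * (k'.-1))%N%:R * c * z2, z0, z1)
  end.

Definition zeta (k : nat) : T := (zeta_aux k).1.1.

Definition zetaZ (n : int) : T :=
  match n with Posz k => zeta k | Negz _ => 0 end.

End Zeta.

Definition ideal_gen (T : comRingType) (S : T -> Prop) (p : T) : Prop :=
  exists (gs cs : seq T),
    (forall i, (i < size gs)%N -> S gs`_i) /\
    p = \sum_(i < size gs) cs`_i * gs`_i.

Definition CAG := {poly {poly algC}}.
Definition alpha : CAG := 'X.
Definition gamma : CAG := ('X)%:P.

Definition zetam (k : nat) : CAG := zeta alpha (-8) gamma k.
Definition zetamZ (n : int) : CAG := zetaZ alpha (-8) gamma n.

Definition Jm (k : nat) : CAG -> Prop :=
  ideal_gen (fun q => q = zetam k \/ q = zetam k.+1 \/ q = zetam k.+2).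

(* With beta = -8 the recurrence loses its middle term at even indices: for
   even m,
     zeta_(m+3) = alpha zeta_(m+2) + 2(m+2)(m+1) gamma zeta_m,
     zeta_(m+4) = alpha zeta_(m+3) - 16(m+3)^2 zeta_(m+2)
                  + 2(m+3)(m+2) gamma zeta_(m+1).
   Read forwards, these put zeta_(m+3) and zeta_(m+4) in
   (zeta_(m+2)) + gamma J_m; solved for gamma zeta_m and gamma zeta_(m+1),
   which is possible because positive integers are invertible, they put
   gamma J_m inside J_(m+2).  Iterating gamma J_m <= J_(m+2) gives the second
   claim; when 2i > g the index g - 2i is negative and the term is 0. *)
From mathcomp Require Import all_boot all_order all_algebra all_field.
From mathcomp Require Import zify ring.
Set Implicit Arguments. Unset Strict Implicit. Unset Printing Implicit Defensive.
Import Order.TTheory GRing.Theory Num.Theory.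

Local Open Scope ring_scope.

Section IdealGen.
Variable T : comRingType.
Implicit Types (S : T -> Prop) (p q x g : T).

Lemma ideal_gen0 S : ideal_gen S 0.
Proof. by exists [::], [::]; rewrite big_ord0. Qed.

Lemma ideal_gen_cons S x g p :
  S g -> ideal_gen S p -> ideal_gen S (x * g + p).
Proof.
move=> Sg [gs [cs [Sgs ->]]]; exists (g :: gs), (x :: cs); split.
  by case=> [|i] //= /Sgs.
by rewrite big_ord_recl.
Qed.

Lemma ideal_gen_ind S (P : T -> Prop) :
  P 0 -> (forall x g p, S g -> P p -> P (x * g + p)) ->
  forall p, ideal_gen S p -> P p.
Proof.
move=> P0 Pcons p [gs [cs [Sgs ->]]].
elim: gs cs Sgs => [|g gs IH] cs Sgs; first by rewrite big_ord0.
rewrite big_ord_recl; apply: Pcons; first exact: (Sgs 0%N).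
have := IH (behead cs) (fun i => Sgs i.+1).
by under eq_bigr => i _ do rewrite nth_behead.
Qed.

Lemma ideal_gen1 S g : S g -> ideal_gen S g.
Proof. by move=> Sg; rewrite -[g]addr0 -[g]mul1r; apply/ideal_gen_cons/ideal_gen0. Qed.

Lemma ideal_genD S p q : ideal_gen S p -> ideal_gen S q -> ideal_gen S (p + q).
Proof.
move=> Ip Iq; move: p Ip; apply: ideal_gen_ind; first by rewrite add0r.
by move=> x g p Sg Ipq; rewrite -addrA; apply: ideal_gen_cons.
Qed.

Lemma ideal_genMl S x p : ideal_gen S p -> ideal_gen S (x * p).
Proof.
move: p; apply: ideal_gen_ind; first by rewrite mulr0; apply: ideal_gen0.
by move=> y g p Sg Ip; rewrite mulrDr mulrA; apply: ideal_gen_cons.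
Qed.

Lemma ideal_genN S p : ideal_gen S p -> ideal_gen S (- p).
Proof. by rewrite -mulN1r; apply: ideal_genMl. Qed.

Lemma ideal_genB S p q : ideal_gen S p -> ideal_gen S q -> ideal_gen S (p - q).
Proof. by move=> Ip /ideal_genN; apply: ideal_genD. Qed.

Lemma ideal_gen_scale_sub S (S' : T -> Prop) x :
  (forall g, S g -> ideal_gen S' (x * g)) ->
  forall p, ideal_gen S p -> ideal_gen S' (x * p).
Proof.
move=> SS'; apply: ideal_gen_ind; first by rewrite mulr0; apply: ideal_gen0.
move=> y g p /SS' Ixg Ixp; rewrite mulrDr mulrCA.
exact/ideal_genD/Ixp/ideal_genMl.
Qed.

Lemma ideal_gen_sub S (S' : T -> Prop) :
  (forall g, S g -> ideal_gen S' g) ->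
  forall p, ideal_gen S p -> ideal_gen S' p.
Proof.
move=> SS' p Ip; rewrite -[p]mul1r.
by apply: (ideal_gen_scale_sub _ Ip) => g; rewrite mul1r; apply: SS'.
Qed.

End IdealGen.

Lemma zetaSSS (T : comRingType) (a b c : T) k :
  zeta a b c k.+3 = a * zeta a b c k.+2
    + (k.+2 ^ 2)%N%:R * (b + (-1) ^+ k.+2 * 8) * zeta a b c k.+1
    + (2 * k.+2 * k.+1)%N%:R * c * zeta a b c k.
Proof. by rewrite /zeta /=; case: (zeta_aux a b c k) => [[x y] z]. Qed.

Section ZetaMinus.
Variables (T : comUnitRingType) (a c : T).
Hypothesis natrS_unit : forall n : nat, (n.+1%:R : T) \is a GRing.unit.

Local Notation z := (zeta a (-8) c).

Definition J (k : nat) : T -> Prop :=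
  ideal_gen (fun q => q = z k \/ q = z k.+1 \/ q = z k.+2).

Definition zeta_plus_cJ (m : nat) : T -> Prop :=
  ideal_gen (fun q => q = z m.+2 \/ exists r, J m r /\ q = c * r).

Lemma zeta_even_step m : ~~ odd m ->
  z m.+3 = a * z m.+2 + (2 * m.+2 * m.+1)%N%:R * (c * z m).
Proof. by move=> m_even; rewrite zetaSSS -signr_odd /= (negbTE m_even); ring. Qed.

Lemma zeta_odd_step m : ~~ odd m ->
  z m.+4 = a * z m.+3 - (16 * m.+3 ^ 2)%N%:R * z m.+2
           + (2 * m.+3 * m.+2)%N%:R * (c * z m.+1).
Proof. by move=> m_even; rewrite zetaSSS -signr_odd /= (negbTE m_even); ring. Qed.

Lemma natr_unit n : (0 < n)%N -> (n%:R : T) \is a GRing.unit.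
Proof. by case: n. Qed.

Lemma zeta_in_J k : [/\ J k (z k), J k (z k.+1) & J k (z k.+2)].
Proof. by split; apply: ideal_gen1; [left | right; left | right; right]. Qed.

Lemma zetaSSS_in_zeta_plus_cJ m : ~~ odd m -> zeta_plus_cJ m (z m.+3).
Proof.
move=> m_even; have [Jzm _ _] := zeta_in_J m.
rewrite zeta_even_step //; apply/ideal_genD/ideal_genMl/ideal_gen1.
  by apply/ideal_genMl/ideal_gen1; left.
by right; exists (z m).
Qed.

Lemma J_sub_zeta_plus_cJ m : ~~ odd m -> forall p, J m.+2 p -> zeta_plus_cJ m p.
Proof.
move=> m_even; have [_ Jzm1 _] := zeta_in_J m.
have zm3_in := zetaSSS_in_zeta_plus_cJ m_even.
apply: ideal_gen_sub => _ [->|[->|->]] //; first by apply: ideal_gen1; left.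
rewrite zeta_odd_step //; apply/ideal_genD/ideal_genMl/ideal_gen1.
  apply/ideal_genB/ideal_genMl/ideal_gen1; last by left.
  exact: ideal_genMl.
by right; exists (z m.+1).
Qed.

Lemma mulr_cJ_sub_J m : ~~ odd m -> forall r, J m r -> J m.+2 (c * r).
Proof.
move=> m_even; have [Jz2 Jz3 Jz4] := zeta_in_J m.+2.
apply: ideal_gen_scale_sub => _ [->|[->|->]]; last exact: ideal_genMl.
- have -> : c * z m = (2 * m.+2 * m.+1)%N%:R^-1 * (z m.+3 - a * z m.+2).
    by rewrite zeta_even_step // addrC addKr mulKr ?natr_unit.
  by apply/ideal_genMl/ideal_genB/ideal_genMl.
have -> : c * z m.+1 = (2 * m.+3 * m.+2)%N%:R^-1 *
    (z m.+4 - (a * z m.+3 - (16 * m.+3 ^ 2)%N%:R * z m.+2)).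
  by rewrite zeta_odd_step // addrC addKr mulKr ?natr_unit.
apply/ideal_genMl/ideal_genB => //.
by apply: ideal_genB; apply: ideal_genMl.
Qed.

Lemma J_zeta_plus_cJ m : ~~ odd m -> forall p, J m.+2 p <-> zeta_plus_cJ m p.
Proof.
move=> m_even p; split; first exact: J_sub_zeta_plus_cJ.
apply: ideal_gen_sub => _ [->|[r [Jr ->]]]; first by have [] := zeta_in_J m.+2.
exact: mulr_cJ_sub_J.
Qed.

Lemma J_exprc_zetaZ i g : ~~ odd g ->
  J g (c ^+ i * zetaZ a (-8) c (g%:Z - (2 * i)%N%:Z)).
Proof.
elim: i g => [|i IH] g g_even.
  by rewrite mul1r subr0; have [] := zeta_in_J g.
have [le2ig | lt_g2i] := leqP (2 * i.+1) g; last first.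
  case E: (g%:Z - _) => [k|k]; first lia.
  by rewrite mulr0; apply: ideal_gen0.
case: g g_even le2ig => [|[|m]] //=; rewrite negbK => m_even _.
have -> : m.+2%:Z - (2 * i.+1)%N%:Z = m%:Z - (2 * i)%N%:Z by lia.
by rewrite exprS -mulrA; apply/mulr_cJ_sub_J/IH.
Qed.

End ZetaMinus.

Lemma natrS_unit_CAG n : (n.+1%:R : CAG) \is a GRing.unit.
Proof.
rewrite -[_%:R](rmorph_nat (@polyC _)) -[_%:R](rmorph_nat (@polyC _)).
do 2 apply: rmorph_unit.
by rewrite unitfE pnatr_eq0.
Qed.

Theorem lemma5p1 (g : nat) (Hg : (2 <= g)%N) (Hev : ~~ odd g) :
  (forall p : CAG,
     Jm g p <->
     ideal_gen (fun q => q = zetam g \/ exists r, Jm (g - 2) r /\ q = gamma * r) p)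
  /\ (forall i : nat, Jm g (gamma ^+ i * zetamZ (g%:Z - (2 * i)%N%:Z))).
Proof.
split; last by move=> i; exact: J_exprc_zetaZ alpha gamma natrS_unit_CAG i g Hev.
case: g Hg Hev => [|[|m]] //= _; rewrite negbK subn2 => m_even p.
exact: (J_zeta_plus_cJ alpha gamma natrS_unit_CAG m_even p).
Qed.
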